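(* Let $n\ge2$ and let $\varphi$ be a skew morphism of $\mathbb{Z}_n$ with even complexity and auto-order $m$. Then $\varphi$ is uniquely determined by the triple $(\varphi(1),\varphi',\varphi|_{\langle m\rangle})$: if $\psi$ is any skew morphism of $\mathbb{Z}_n$ with even complexity such that $\psi(1)=\varphi(1)$, $\psi'=\varphi'$ and $\psi(x)=\varphi(x)$ for all $x$ in the subgroup $\langle m\rangle$ of $\mathbb{Z}_n$, then $\psi=\varphi$.
   Context: $\mathbb{Z}_n$ is the cyclic group of integers modulo $n$; $\langle m\rangle$ is the subgroup generated by $m$. A skew morphism of a finite group $G$ is a permutation $\varphi$ of $G$ fixing the identity such that for each $a\in G$ there is a non-negative integer $i_a$ with $\varphi(ab)=\varphi(a)\varphi^{i_a}(b)$ for all $b\in G$. ${\rm ord}(\varphi)$ is the order of $\langle\varphi\rangle$. If $\varphi$ is non-trivial, $\pi_\varphi(a)$ is the unique such $i_a\in\{1,\dots,{\rm ord}(\varphi)-1\}$; if $\varphi$ is the identity, $\pi_\varphi(a)=1$. Let $\sigma_\varphi(x,y)=\sum_{i=0}^{x-1}\pi_\varphi(\varphi^i(y))\in\mathbb{Z}_{{\rm ord}(\varphi)}$. The derived skew morphism $\varphi'$ of a skew morphism $\varphi$ of $\mathbb{Z}_n$ is the skew morphism of $\mathbb{Z}_{{\rm ord}(\varphi)}$ given by $\varphi'(a)=\sigma_\varphi(a,1)$. Set $\varphi^{(0)}=\varphi$, $\varphi^{(i+1)}=(\varphi^{(i)})'$. For $n\ge 2$ the complexity of $\varphi$ is the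 unique non-negative integer $c$ such that $\varphi^{(c)}$ is a skew morphism of a non-trivial cyclic group $\mathbb{Z}_m$ and $\varphi^{(c+1)}$ is a skew morphism of $\mathbb{Z}_1$; $m$ is the auto-order of $\varphi$. (When the complexity is even, $m$ divides $n$ and $\varphi$ maps $\langle m\rangle$ onto itself.) *)

(* Z_n is represented by the naturals 0..n-1 with addition
   modulo n; a map on Z_n is a function nat -> nat (only its values on
   0..n-1 matter). This uniform representation is needed because derived
   skew morphisms live on groups Z_m of varying order m. *)
From mathcomp Require Import all_boot.
Set Implicit Arguments. Unset Strict Implicit. Unset Printing Implicit Defensive.

Definition skew_at (n : nat) (f : nat -> nat) (a i : nat) : bool :=
  all (fun b => f ((a + b) %% n) == (f a + iter i f b) %% n) (iota 0 n).

Definition is_skew (n : nat) (f : nat -> nat) : Prop :=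
  [/\ 0 < n,
      (forall x, x < n -> f x < n),
      (forall x y, x < n -> y < n -> f x = f y -> x = y),
      f 0 = 0 &
      (forall a, a < n -> exists i, skew_at n f a i)].

(* ord(f): the least k >= 1 with f^k = id on Z_n (the order of a permutation
   of n points divides n!, so the search bound n`! suffices) *)
Definition skord (n : nat) (f : nat -> nat) : nat :=
  (find (fun k => all (fun x => iter k.+1 f x == x) (iota 0 n)) (iota 0 n`!)).+1.

(* pi_f(a): the i in {1,...,ord f - 1} with skew_at n f a i (unique for a
   skew morphism); 1 if f is the identity (ord f = 1) *)
Definition skpi (n : nat) (f : nat -> nat) (a : nat) : nat :=
  if skord n f == 1 then 1
  else nth 0 [seq i <- iota 1 (skord n f).-1 |
              skew_at n f a i] 0.

Definition sksigma (n : nat) (f : nat -> nat) (x y : nat) : nat :=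
  (\sum_(i < x) skpi n f (iter i f y)) %% skord n f.

Definition derived (n : nat) (f : nat -> nat) : nat -> nat :=
  fun a => sksigma n f a (1 %% n).

Definition derive (p : nat * (nat -> nat)) : nat * (nat -> nat) :=
  (skord p.1 p.2, derived p.1 p.2).

Definition nth_derived (k : nat) (n : nat) (f : nat -> nat) : nat * (nat -> nat) :=
  iter k derive (n, f).

Definition complexity (n : nat) (f : nat -> nat) (c : nat) : Prop :=
  2 <= (nth_derived c n f).1 /\ (nth_derived c.+1 n f).1 = 1.

Definition auto_order (n : nat) (f : nat -> nat) (c : nat) : nat :=
  (nth_derived c n f).1.

From mathcomp Require Import all_boot all_fingroup cyclic.
From Stdlib Require Import FunctionalExtensionality.
Set Implicit Arguments. Unset Strict Implicit. Unset Printing Implicit Defensive.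

(* Let r = ord phi. Iterating the skew identity gives
     phi^j (a + b) = phi^j a + phi^(sigma (j, a)) b,  sigma (j, a) = phi'^a (j) mod r,
   so the iterates of phi on a sum are governed by phi' alone. Hence, psi having the
   same order and derived map, the set of x at which all iterates of phi and psi agree
   is closed under addition. Moreover phi'' is phi reduced modulo ord phi', so along
   an even derivation tower that ends in the identity of Z_m, phi (and likewise psi,
   whose tower coincides with phi's from level 2 on) is the identity modulo m. Thus
   w = phi 1 - 1 lies in <m>, which psi and phi preserve and on which they agree; all
   iterates agree at w, hence (by induction, as psi 1 = phi 1 = 1 + w) at 1, and then
   everywhere by additivity. *)

Lemma skew_atP n f a i :
  reflect (forall b, b < n -> f ((a + b) %% n) = (f a + iter i f b) %% n)
          (skew_at n f a i).
Proof.
apply: (iffP allP) => H b.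
- by move=> lt_bn; apply/eqP/H; rewrite mem_iota.
- by rewrite mem_iota add0n => lt_bn; apply/eqP/H.
Qed.

Lemma iter_ltn n f k x :
  (forall y, y < n -> f y < n) -> x < n -> iter k f x < n.
Proof. by move=> f_lt lt_xn; elim: k => //= k IHk; apply: f_lt. Qed.

Lemma eq_iter_in (A : pred nat) (f g : nat -> nat) :
  (forall x, A x -> A (g x)) -> (forall x, A x -> f x = g x) ->
  forall j x, A x -> iter j f x = iter j g x.
Proof.
move=> gA efg j x Ax; suff: iter j f x = iter j g x /\ A (iter j g x) by case.
by elim: j => [|j [IHj Aj]] //=; rewrite IHj efg ?gA.
Qed.

Lemma find_iota0 (P : pred nat) N k :
  k < N -> P k -> (forall i, i < k -> ~~ P i) -> find P (iota 0 N) = k.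
Proof.
move=> lt_kN Pk Pi; rewrite -(subnKC (ltnW lt_kN)) iotaD find_cat size_iota.
have -> : has P (iota 0 k) = false.
  by apply/hasPn => i; rewrite mem_iota; apply: Pi.
by rewrite add0n -(subnSK lt_kN) /= Pk addn0.
Qed.

Lemma modn_addl_inj n c x y :
  x < n -> y < n -> (c + x) %% n = (c + y) %% n -> x = y.
Proof. by move=> lt_xn lt_yn /eqP; rewrite eqn_modDl !modn_small // => /eqP. Qed.

Definition nat_perm n (f : nat -> nat) :=
  (forall x, x < n -> f x < n) /\
  (forall x y, x < n -> y < n -> f x = f y -> x = y).

Lemma skew_nat_perm n f : is_skew n f -> nat_perm n f.
Proof. by case. Qed.

Section NatPerm.

Variables (n : nat) (f : nat -> nat).
Hypothesis fP : nat_perm n f.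

Let ford (i : 'I_n) : 'I_n := Ordinal (proj1 fP _ (ltn_ord i)).

Let ford_inj : injective ford.
Proof. by move=> i j /(congr1 val) /(proj2 fP) eq_ij; apply/val_inj/eq_ij. Qed.

Let fperm := perm ford_inj.

Let fpermX k (i : 'I_n) : val ((fperm ^+ k)%g i) = iter k f i.
Proof. by rewrite permX; elim: k => //= k <-; rewrite permE. Qed.

Let fpermX_eq1 k :
  ((fperm ^+ k)%g == 1%g) = all (fun x => iter k f x == x) (iota 0 n).
Proof.
apply/idP/allP => [/eqP fk1 x | fk_id].
  by rewrite mem_iota add0n => lt_xn; rewrite -(fpermX k (Ordinal lt_xn)) fk1 perm1.
apply/eqP/permP => i; apply: val_inj; rewrite fpermX perm1.
by apply/eqP/fk_id; rewrite mem_iota add0n ltn_ord.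
Qed.

Let skord_order : skord n f = #[fperm]%g.
Proof.
have ord_gt0 := order_gt0 fperm.
rewrite /skord (@find_iota0 _ _ #[fperm]%g.-1) ?prednK //.
- by rewrite dvdn_leq ?fact_gt0 // -card_Sn -cardsT order_dvdG ?inE.
- by rewrite -fpermX_eq1 expg_order.
by move=> i lt_i; rewrite -fpermX_eq1 -order_dvdn gtnNdvd // -ltn_predRL.
Qed.

Lemma iter_skord_mod k x : x < n -> iter k f x = iter (k %% skord n f) f x.
Proof.
by move=> lt_xn; rewrite -!(fpermX _ (Ordinal lt_xn)) skord_order expg_mod_order.
Qed.

Lemma iter_skord x : x < n -> iter (skord n f) f x = x.
Proof. by move=> lt_xn; rewrite iter_skord_mod // modnn. Qed.

Lemma skord1_id : skord n f = 1 -> forall x, x < n -> f x = x.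
Proof. by move=> r1 x lt_xn; rewrite -[f x]/(iter 1 f x) iter_skord_mod // r1. Qed.

Lemma eq_iter_skord i j :
  (forall x, x < n -> iter i f x = iter j f x) -> i = j %[mod skord n f].
Proof.
move=> eq_ij; apply/eqP; rewrite skord_order -eq_expg_mod_order.
by apply/eqP; apply/permP => x; apply: val_inj; rewrite !fpermX eq_ij.
Qed.

End NatPerm.

Definition sksum n f j a := \sum_(i < j) skpi n f (iter i f a).

Lemma sksumS n f j a : sksum n f j.+1 a = sksum n f j a + skpi n f (iter j f a).
Proof. by rewrite /sksum big_ord_recr. Qed.

Lemma sksumD n f j k a :
  sksum n f (j + k) a = sksum n f j a + sksum n f k (iter j f a).
Proof.
rewrite /sksum big_split_ord; congr (_ + _); apply: eq_bigr => i _.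
by rewrite /= addnC iterD.
Qed.

Lemma derivedE n f a : derived n f a = sksum n f a (1 %% n) %% skord n f.
Proof. by []. Qed.

Lemma derived_lt n f a : derived n f a < skord n f.
Proof. exact: ltn_pmod. Qed.

Section SkewMorphism.

Variables (n : nat) (f : nat -> nat).
Hypothesis fS : is_skew n f.

Local Notation r := (skord n f).
Local Notation f' := (derived n f).

Let n_gt0 : 0 < n. Proof. by case: fS. Qed.
Let f_lt : forall x, x < n -> f x < n. Proof. by case: fS. Qed.
Let f0 : f 0 = 0. Proof. by case: fS. Qed.
Let fP : nat_perm n f. Proof. exact: skew_nat_perm. Qed.
Let iter_lt k x : x < n -> iter k f x < n. Proof. exact: iter_ltn. Qed.

Lemma skew_at0_id y : y < n -> skew_at n f y 0 -> forall x, x < n -> f x = x.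
Proof.
move=> lt_yn /skew_atP /= f_shift.
have y_ny : y + (n - y) = n by rewrite subnKC // ltnW.
have shift x : x < n -> (y + (x + (n - y)) %% n) %% n = x.
  by move=> lt_xn; rewrite modnDmr addnCA y_ny modnDr modn_small.
have fy : f y = y.
  have := f_shift _ (ltn_pmod (0 + (n - y)) n_gt0).
  rewrite shift // f0 modnDmr add0n => e0.
  have : f y + (n - y) == y + (n - y) %[mod n] by rewrite y_ny modnn -e0.
  by rewrite eqn_modDr !modn_small ?f_lt // => /eqP.
by move=> x lt_xn; rewrite -{1}(shift x lt_xn) f_shift ?ltn_pmod // fy shift.
Qed.

Lemma skpiP y : y < n -> skew_at n f y (skpi n f y).
Proof.
move=> lt_yn; rewrite /skpi; case: eqP => [r1 | r_neq1].
  have f_id := skord1_id fP r1.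
  by apply/skew_atP => b lt_bn /=; rewrite !f_id ?ltn_pmod.
have [i fi] : exists i, skew_at n f y i by case: fS => _ _ _ _; apply.
have fi_mod : skew_at n f y (i %% r).
  by apply/skew_atP => b lt_bn; rewrite -iter_skord_mod //; apply/skew_atP.
(* Exponent 0 would make f a translation fixing 0, i.e. the identity, so r = 1. *)
have i_gt0 : 0 < i %% r.
  rewrite lt0n; apply/eqP => i0; apply: r_neq1.
  have f_id := skew_at0_id lt_yn (etrans (congr1 _ (esym i0)) fi_mod).
  have := eq_iter_skord fP (i := 1) (j := 0) f_id; rewrite mod0n => r_dvd1.
  by apply/eqP; rewrite -dvdn1; apply/eqP.
set s := [seq j <- iota 1 r.-1 | skew_at n f y j].
have i_in : i %% r \in s.
  by rewrite mem_filter fi_mod mem_iota i_gt0 add1n prednK // ltn_pmod.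
have /(mem_nth 0) : 0 < size s by case: s i_in.
by rewrite mem_filter => /andP[].
Qed.

Lemma skew_at_uniq y i j :
  y < n -> skew_at n f y i -> skew_at n f y j -> i = j %[mod r].
Proof.
move=> lt_yn /skew_atP fi /skew_atP fj; apply: (eq_iter_skord fP) => x lt_xn.
by apply: (@modn_addl_inj n (f y)); rewrite ?iter_lt // -fi // -fj.
Qed.

Lemma iter_skew_sum j a b : a < n -> b < n ->
  iter j f ((a + b) %% n) = (iter j f a + iter (sksum n f j a) f b) %% n.
Proof.
move=> lt_an lt_bn; elim: j => [|j IHj]; first by rewrite /sksum big_ord0.
rewrite !iterS IHj; move/skew_atP: (skpiP (iter_lt j lt_an)) => ->; last exact: iter_lt.
by rewrite -iterD sksumS (addnC (sksum _ _ _ _)).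
Qed.

Lemma skpi0 : skpi n f 0 = 1 %[mod r].
Proof.
apply: (eq_iter_skord fP) => x lt_xn.
move/skew_atP: (skpiP n_gt0) => /(_ x lt_xn).
by rewrite add0n f0 add0n !modn_small ?iter_lt ?f_lt // => <-.
Qed.

Lemma sksum0 j : sksum n f j 0 = j %[mod r].
Proof.
have -> : sksum n f j 0 = j * skpi n f 0.
  rewrite /sksum (eq_bigr (fun=> skpi n f 0)) ?sum_nat_const ?card_ord // => i _.
  by rewrite iter_fix.
by rewrite -modnMmr skpi0 modnMmr muln1.
Qed.

Lemma sksum_skord a : a < n -> sksum n f r a = 0 %[mod r].
Proof.
move=> lt_an; apply: (eq_iter_skord fP) => b lt_bn /=.
apply: (@modn_addl_inj n a); rewrite ?iter_lt //.
by have := iter_skew_sum r lt_an lt_bn; rewrite !iter_skord ?ltn_pmod // => ->.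
Qed.

Lemma sksum_mod j a : a < n -> sksum n f j a = sksum n f (j %% r) a %[mod r].
Proof.
move=> lt_an; rewrite {1}(divn_eq j r) addnC.
elim: (j %/ r) => [|q IHq]; first by rewrite mul0n addn0.
rewrite mulSnr addnA sksumD -modnDmr sksum_skord ?iter_lt //.
by rewrite mod0n addn0.
Qed.

Lemma sksum_add j a b : a < n -> b < n ->
  sksum n f j ((a + b) %% n) = sksum n f (sksum n f j a) b %[mod r].
Proof.
move=> lt_an lt_bn; apply: (eq_iter_skord fP) => c lt_cn.
have lt_ab := ltn_pmod (a + b) n_gt0; have lt_bc := ltn_pmod (b + c) n_gt0.
have assoc : (a + (b + c) %% n) %% n = ((a + b) %% n + c) %% n.
  by rewrite modnDml modnDmr addnA.
have := iter_skew_sum j lt_an lt_bc.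
rewrite assoc (iter_skew_sum j lt_ab lt_cn) (iter_skew_sum j lt_an lt_bn).
rewrite (iter_skew_sum _ lt_bn lt_cn) modnDml modnDmr addnA.
by move/modn_addl_inj; apply; rewrite iter_lt.
Qed.

Lemma sksum_derived k x : x < n -> sksum n f k x %% r = iter x f' (k %% r).
Proof.
elim: x k => [|x IHx] k lt_xn; first exact: sksum0.
have n_gt1 : 1 < n := leq_ltn_trans (ltn0Sn x) lt_xn.
have := sksum_add k (ltnW lt_xn) (ltn_pmod 1 n_gt0).
rewrite (modn_small n_gt1) addn1 (modn_small lt_xn) => ->.
by rewrite sksum_mod ?ltn_pmod // IHx 1?ltnW // iterS derivedE (modn_small n_gt1).
Qed.

Lemma iter_skew_derived j a b : a < n -> b < n ->
  iter j f ((a + b) %% n) = (iter j f a + iter (iter a f' (j %% r)) f b) %% n.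
Proof.
move=> lt_an lt_bn.
by rewrite iter_skew_sum // (iter_skord_mod fP _ lt_bn) sksum_derived.
Qed.

Lemma iter_derived_n k : k < r -> iter n f' k = k.
Proof.
move=> lt_kr; have lt_n1 : n.-1 < n by rewrite prednK.
have := sksum_add k lt_n1 (ltn_pmod 1 n_gt0).
rewrite modnDmr addn1 prednK // modnn sksum0 (modn_small lt_kr).
rewrite sksum_mod ?ltn_pmod // (sksum_derived k lt_n1) (modn_small lt_kr).
by rewrite -derivedE -iterS prednK.
Qed.

Lemma derived_skew_at a : a < r -> skew_at r f' a (iter a f (1 %% n)).
Proof.
move=> lt_ar; apply/skew_atP => k lt_kr.
have lt_1a : iter a f (1 %% n) < n by rewrite iter_lt ?ltn_pmod.
rewrite derivedE -sksum_mod ?ltn_pmod // sksumD -modnDml -modnDmr.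
by rewrite (sksum_derived k lt_1a) (modn_small lt_kr) -derivedE.
Qed.

Lemma derived_is_skew : is_skew r f'.
Proof.
split=> // [x _ | x y lt_xr lt_yr eq_xy | | a lt_ar].
- exact: derived_lt.
- have := congr1 (iter n.-1 f') eq_xy.
  by rewrite -!iterSr prednK // !iter_derived_n.
- by rewrite derivedE /sksum big_ord0.
by exists (iter a f (1 %% n)); apply: derived_skew_at.
Qed.

Lemma skord_derived_dvdn : skord r f' %| n.
Proof.
have f'P := skew_nat_perm derived_is_skew.
have := eq_iter_skord f'P (i := n) (j := 0) (fun x lt_xr => iter_derived_n lt_xr).
by rewrite mod0n => /eqP.
Qed.

Lemma skewE_sum a : a < n -> f a = (\sum_(i < a) iter (skpi n f i) f (1 %% n)) %% n.
Proof.
elim: a => [|a IHa] lt_an; first by rewrite big_ord0 mod0n.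
have n_gt1 : 1 < n := leq_ltn_trans (ltn0Sn a) lt_an.
move/skew_atP: (skpiP (ltnW lt_an)) => /(_ _ n_gt1).
rewrite (modn_small n_gt1) addn1 (modn_small lt_an) => ->.
by rewrite big_ord_recr /= IHa 1?ltnW // modnDml (modn_small n_gt1).
Qed.

End SkewMorphism.

Section SecondDerived.

Variables (n : nat) (f : nat -> nat).
Hypothesis fS : is_skew n f.

Local Notation r := (skord n f).
Local Notation f' := (derived n f).
Local Notation m := (skord r f').
Local Notation f'' := (derived r f').

Lemma derived2E a : a < n -> f'' a = f a %% m.
Proof.
move=> lt_an; have f'S := derived_is_skew fS; have n_gt0 : 0 < n by case: fS.
rewrite derivedE (skewE_sum fS lt_an) (modn_dvdm _ (skord_derived_dvdn fS)) /sksum.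
rewrite -modn_summ -[RHS]modn_summ; congr (_ %% _); apply: eq_bigr => i _.
have lt_in : i < n := ltn_trans (ltn_ord i) lt_an.
have lt_y : iter i f' (1 %% r) < r.
  by apply: iter_ltn; [move=> y _; apply: derived_lt | apply: ltn_pmod].
rewrite (skew_at_uniq f'S lt_y (skpiP f'S lt_y) (derived_skew_at fS lt_y)).
rewrite -(sksum_derived fS 1 lt_in) /sksum big_ord1.
by rewrite -(iter_skord_mod (skew_nat_perm fS)) ?ltn_pmod.
Qed.

Lemma derived2_mod b : b < n -> f'' (b %% m) = f b %% m.
Proof.
move=> lt_bn; rewrite -derived2E // !derivedE.
by rewrite -(sksum_mod (derived_is_skew fS)) ?ltn_pmod.
Qed.

End SecondDerived.

Lemma even_derived n f k : is_skew n f ->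
  let: (m, g) := nth_derived k.*2 n f in
  [/\ is_skew m g, m %| n & forall a, a < n -> g (a %% m) = f a %% m].
Proof.
move=> fS; elim: k => [|k].
  by case: (fS) => _ f_lt _ _ _; split=> // a lt_an; rewrite !modn_small ?f_lt.
rewrite doubleS /nth_derived !iterS -/(nth_derived k.*2 n f).
case: (nth_derived k.*2 n f) => m g [gS m_dvd g_mod] /=.
have m''_dvd := skord_derived_dvdn gS.
split; first exact: derived_is_skew (derived_is_skew gS).
  exact: dvdn_trans m''_dvd m_dvd.
move=> a lt_an; have m_gt0 : 0 < m by case: gS.
rewrite -(modn_dvdm a m''_dvd) derived2_mod ?ltn_pmod // g_mod //.
exact: modn_dvdm.
Qed.

Lemma even_complexity_mod n f c : is_skew n f -> ~~ odd c ->
  (nth_derived c.+1 n f).1 = 1 ->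
  auto_order n f c %| n /\ forall a, a < n -> f a = a %[mod auto_order n f c].
Proof.
move=> fS c_even; rewrite /auto_order -[c](odd_double_half c) (negbTE c_even) add0n.
rewrite [nth_derived _.+1 _ _]/nth_derived iterS -/(nth_derived _ n f).
have := even_derived c./2 fS; case: (nth_derived _ n f) => m g [gS m_dvd g_mod] /= g1.
split=> // a lt_an; have m_gt0 : 0 < m by case: gS.
by rewrite -g_mod // (skord1_id (skew_nat_perm gS) g1) ?ltn_pmod.
Qed.

Section DeriveCongr.

Variables (r : nat) (g1 g2 : nat -> nat).
Hypothesis eq_g : forall a, a < r -> g1 a = g2 a.
Hypothesis g2_lt : forall a, a < r -> g2 a < r.

Let eq_iter j x : x < r -> iter j g1 x = iter j g2 x.
Proof. exact: (@eq_iter_in (fun x => x < r)). Qed.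

Lemma eq_skord_in : skord r g1 = skord r g2.
Proof.
rewrite /skord; congr _.+1; apply: eq_find => k.
by apply: eq_in_all => x; rewrite mem_iota add0n => lt_xr; rewrite eq_iter.
Qed.

Lemma eq_skew_at_in y i : y < r -> skew_at r g1 y i = skew_at r g2 y i.
Proof.
move=> lt_yr; have r_gt0 : 0 < r := leq_ltn_trans (leq0n y) lt_yr.
apply: eq_in_all => b; rewrite mem_iota add0n => lt_br.
by rewrite !eq_g ?ltn_pmod // eq_iter.
Qed.

Lemma eq_derive_in : 0 < r -> derive (r, g1) = derive (r, g2).
Proof.
move=> r_gt0; rewrite /derive /= eq_skord_in; congr (_, _).
apply: functional_extensionality => a; rewrite !derivedE eq_skord_in.
congr (_ %% _); apply: eq_bigr => i _.
have lt_y : iter i g2 (1 %% r) < r := iter_ltn _ g2_lt (ltn_pmod 1 r_gt0).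
rewrite eq_iter ?ltn_pmod // /skpi eq_skord_in; case: eqP => // _.
by congr (nth 0 _ 0); apply: eq_in_filter => j _; apply: eq_skew_at_in.
Qed.

End DeriveCongr.

Lemma nth_derived_order_eq n phi psi :
  skord n psi = skord n phi ->
  (forall a, a < skord n phi -> derived n psi a = derived n phi a) ->
  forall k, (nth_derived k n psi).1 = (nth_derived k n phi).1.
Proof.
move=> skord_eq derived_eq [|[|k]] //.
rewrite /nth_derived !iterSr [derive (n, psi)]/derive [derive (n, phi)]/derive /=.
by rewrite skord_eq (eq_derive_in derived_eq (fun a _ => derived_lt n phi a)).
Qed.

Section Uniqueness.

Variables (n : nat) (phi psi : nat -> nat).
Hypotheses (n_gt1 : 1 < n) (phiS : is_skew n phi) (psiS : is_skew n psi).
Hypothesis skord_eq : skord n psi = skord n phi.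
Hypothesis derived_eq :
  forall a, a < skord n phi -> derived n psi a = derived n phi a.

Let n_gt0 : 0 < n := ltnW n_gt1.
Let phi_lt : forall x, x < n -> phi x < n. Proof. by case: phiS. Qed.

Let coincide x := forall j, iter j psi x = iter j phi x.

Lemma iter_add_coincide j a b : a < n -> b < n ->
  iter j psi a = iter j phi a -> coincide b ->
  iter j psi ((a + b) %% n) = iter j phi ((a + b) %% n).
Proof.
move=> lt_an lt_bn eq_a cb; rewrite !iter_skew_derived // skord_eq eq_a cb.
congr ((_ + iter _ _ _) %% _); apply: (@eq_iter_in (fun x => x < skord n phi)).
- by move=> x _; apply: derived_lt.
- exact: derived_eq.
exact: ltn_pmod.
Qed.

Lemma skew_eq_of_coincide w : psi 1 = phi 1 -> w < n ->
  (1 + w) %% n = phi 1 -> coincide w -> forall x, x < n -> psi x = phi x.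
Proof.
move=> psi1 lt_wn phi1 cw.
have c1 : coincide 1.
  by elim=> // j IHj; rewrite !iterSr psi1 -phi1 iter_add_coincide.
suff cx x : x < n -> coincide x by move=> x /cx /(_ 1).
elim: x => [_ j|x IHx lt_xn].
  by rewrite !iter_fix //; [case: phiS | case: psiS].
have -> : x.+1 = (1 + x) %% n by rewrite add1n modn_small.
by move=> j; apply: iter_add_coincide (ltnW lt_xn) (c1 j) (IHx (ltnW lt_xn)).
Qed.

Lemma skew_eq_of_derived_mod m : m %| n ->
  (forall a, a < n -> phi a = a %[mod m]) ->
  (forall a, a < n -> psi a = a %[mod m]) ->
  (forall x, x < n -> m %| x -> psi x = phi x) ->
  psi 1 = phi 1 -> forall x, x < n -> psi x = phi x.
Proof.
move=> m_dvd phi_mod psi_mod eq_m psi1.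
pose w := (phi 1 + (n - 1)) %% n.
have n_1n : 1 + (n - 1) = n by rewrite subnKC.
apply: (@skew_eq_of_coincide w psi1); first exact: ltn_pmod.
  by rewrite modnDmr addnCA n_1n modnDr modn_small ?phi_lt.
pose A x := (x < n) && (m %| x).
have phiA x : A x -> A (phi x).
  by case/andP=> lt_xn m_x; rewrite /A phi_lt // /dvdn phi_mod.
have Aw : A w.
  rewrite /A ltn_pmod // /dvdn modn_dvdm // -modnDml phi_mod //.
  by rewrite modnDml n_1n.
move=> j; apply: (eq_iter_in phiA) Aw => x /andP[]; exact: eq_m.
Qed.

End Uniqueness.

Unset Implicit Arguments.

Theorem theorem4p3 (n : nat) (phi psi : nat -> nat) (c d : nat) :
  2 <= n ->
  is_skew n phi -> complexity n phi c -> ~~ odd c ->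
  is_skew n psi -> complexity n psi d -> ~~ odd d ->
  psi 1 = phi 1 ->
  skord n psi = skord n phi ->
  (forall a, a < skord n phi -> derived n psi a = derived n phi a) ->
  (forall x, x < n -> auto_order n phi c %| x -> psi x = phi x) ->
  forall x, x < n -> psi x = phi x.
Proof.
(* d is unused: agreement of the derived maps forces psi's complexity to be c. *)
move=> n_gt1 phiS [_ top1] c_even psiS _ _ psi1 skord_eq derived_eq eq_sub.
have eq_order := nth_derived_order_eq skord_eq derived_eq.
have [m_dvd phi_mod] := even_complexity_mod phiS c_even top1.
have [_ psi_mod] := even_complexity_mod psiS c_even (etrans (eq_order _) top1).
rewrite /auto_order eq_order -/(auto_order n phi c) in psi_mod.
exact: (skew_eq_of_derived_mod n_gt1 phiS psiS skord_eq derived_eq m_dvd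
        phi_mod psi_mod eq_sub psi1).
Qed.
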